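(* Let $\mu,w,w'\in\mathbb{R}^d$ and $\sigma_1,\dots,\sigma_d>0$, and let $P=N(\mu,\mathrm{diag}(\sigma_1^2,\dots,\sigma_d^2))$. Consider affine flows of the diagonal form $w_i\mapsto a_iw_i+b_i$ ($i=1,\dots,d$) with $a_i\neq 0$, and the problem of minimizing $D_{\mathrm{KL}}[P'\,\|\,P]$ over $(a_1,\dots,a_d,b_1,\dots,b_d)$, where $P'$ is the push-forward of $P$ under this flow, subject to the constraint $w_i'=a_iw_i+b_i$ for all $i$. Put $u_i=(w_i-\mu_i)/\sigma_i$ and $v_i=(w_i'-\mu_i)/\sigma_i$. Then the optimal transformation is given by $$a_i^\ast=\frac{u_iv_i+\delta_i\sqrt{4+u_i^2(4+v_i^2)}}{2(1+u_i^2)}$$ for some $\delta_i\in\{-1,+1\}$, and the posterior hyperparameters (the mean $\mu_i'$ and standard deviation $\sigma_i'$ of the $i$-th component of $P'$) are $$\sigma_i'=a_i^\ast\sigma_i,\qquad \mu_i'=a_i^\ast(\mu_i-w_i)+w_i'.$$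
   Context: $\mathrm{diag}(\cdot)$ denotes a diagonal matrix; subscripts $i$ denote vector components. The push-forward of $N(\mu,\mathrm{diag}(\sigma_i^2))$ under $w_i\mapsto a_iw_i+b_i$ is the Gaussian with independent components of mean $a_i\mu_i+b_i$ and variance $a_i^2\sigma_i^2$. $D_{\mathrm{KL}}$ is the Kullback–Leibler divergence. *)

From HB Require Import structures.
From mathcomp Require Import all_boot all_order all_algebra.
From mathcomp Require Import all_classical all_reals all_analysis.
Set Implicit Arguments. Unset Strict Implicit. Unset Printing Implicit Defensive.
Import Order.TTheory GRing.Theory Num.Theory.
Local Open Scope ring_scope.

Definition KL_normal1 {R : realType} (m' s' m s : R) : \bar R :=
  (\int[@lebesgue_measure R]_x
     (normal_pdf m' s' x * ln (normal_pdf m' s' x / normal_pdf m s x))%:E)%E.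

(* D_KL between two Gaussians on R^d with diagonal covariances
   (independent components): the sum of the componentwise divergences. *)
Definition KL_diag_normal {R : realType} (d : nat) (m' s' m s : 'I_d -> R)
  : \bar R :=
  (\sum_(i < d) KL_normal1 (m' i) (s' i) (m i) (s i))%E.

(* Objective: D_KL[P' || P] where P = N(mu, diag(sigma_i^2)) and P' is the
   push-forward of P under w_i |-> a_i w_i + b_i, i.e. the Gaussian with
   independent components of mean a_i mu_i + b_i and variance a_i^2 sigma_i^2
   (normal_pdf only depends on the square of its scale parameter). *)
Definition flow_KL {R : realType} (d : nat) (mu sigma a b : 'I_d -> R)
  : \bar R :=
  KL_diag_normal (fun i => a i * mu i + b i) (fun i => a i * sigma i) mu sigma.

Definition admissible {R : realType} (d : nat) (w w' a b : 'I_d -> R) : Prop :=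
  forall i, a i != 0 /\ w' i = a i * w i + b i.

Definition optimal_flow {R : realType} (d : nat) (mu sigma w w' a b : 'I_d -> R)
  : Prop :=
  admissible w w' a b /\
  forall a' b', admissible w w' a' b' ->
    (flow_KL mu sigma a b <= flow_KL mu sigma a' b')%E.

From HB Require Import structures.
From mathcomp Require Import all_boot all_order all_algebra.
From mathcomp Require Import all_classical all_reals all_analysis.
From mathcomp Require Import measurable_realfun ring lra.
Import Order.TTheory GRing.Theory Num.Theory.
Local Open Scope ring_scope.
Local Open Scope classical_set_scope.

(* The constraint forces b_i = w'_i - a_i w_i, and the closed form of the KL divergence
   between one-dimensional Gaussians turns the objective into a sum of independent costs
   -ln|a_i| + ((v_i - a_i u_i)^2 + a_i^2)/2 - 1/2 in the standardized coordinates u, v.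
   The stationary points of one cost solve (1 + u^2) a^2 - u v a - 1 = 0, whose two roots
   have opposite signs, and ln x <= x - 1 shows that on each half-line the root is the
   unique minimiser; hence an optimum exists and every optimum is one of the roots.
   The push-forward of N(mu, sigma^2) under x |-> a x + b is N(a mu + b, (a sigma)^2) by the
   affine change of variables for Lebesgue measure, obtained from the uniqueness of a
   measure agreeing with it on intervals.
   The KL closed form only uses the first two moments of N(0, 1); the second one comes
   without differentiation from comparing N(0, s^2) with N(0, 1) through exp x >= 1 + x. *)

Section affine_change_of_variables.
Context {R : realType} (c e : R).
Hypothesis c0 : c != 0.
Local Notation mu := (@lebesgue_measure R).
(* Typed on [measurableTypeR R] so that [pushforward mu affine] is recognised as a measure. *)
Definition affine (y : measurableTypeR R) : measurableTypeR R := c * y + e.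

Lemma measurable_affine : measurable_fun [set: R] affine.
Proof. by apply: measurable_funD => //; exact: measurable_funM. Qed.

Lemma lebesgue_measure_affine_itv (a b : R) :
  (`|c|%:E * pushforward mu affine `]a, b] = mu `]a, b])%E.
Proof.
rewrite /pushforward /affine.
have [cp|cn] := ltrP 0 c.
  rewrite (_ : _ @^-1` _ = `](a - e) / c, (b - e) / c]); last first.
    apply/seteqP; split => y /=; rewrite !in_itv /= ltr_pdivrMr // ler_pdivlMr //;
      by rewrite ![_ * c]mulrC ltrBlDr lerBrDr.
  rewrite !lebesgue_measure_itv /= !lte_fin ltr_pM2r ?invr_gt0 // ltrD2r.
  case: ifP => ab; last by rewrite mule0.
  by rewrite -EFinB -EFinM gtr0_norm //; congr EFin; field; rewrite gt_eqF.
have {}cn : c < 0 by rewrite lt_neqAle c0 cn.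
rewrite (_ : _ @^-1` _ = `[(b - e) / c, (a - e) / c[); last first.
  apply/seteqP; split => y /=; rewrite !in_itv /= ltr_ndivlMr // ler_ndivrMr //;
    by rewrite ![_ * c]mulrC => /andP[? ?]; apply/andP; split; lra.
rewrite !lebesgue_measure_itv /= !lte_fin ltr_nM2r ?invr_lt0 // ltrD2r.
case: ifP => ab; last by rewrite mule0.
by rewrite -EFinB -EFinM ltr0_norm //; congr EFin; field; rewrite lt_eqF.
Qed.

Lemma lebesgue_measure_affine (A : set R) : measurable A ->
  mu A = (`|c|%:E * pushforward mu affine A)%E.
Proof.
apply: (@lebesgue_measure_unique R
  (mscale (NngNum (normr_ge0 c)) (pushforward mu affine))).
  exact: measurable_affine.
by move=> ? _ [[a b]] _ <-; exact/esym/lebesgue_measure_affine_itv.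
Qed.

Lemma ge0_integral_affine (f : R -> \bar R) : measurable_fun [set: R] f ->
    (forall x, (0 <= f x)%E) ->
  (\int[mu]_x f x = `|c|%:E * \int[mu]_y f (c * y + e)%R)%E.
Proof.
move=> mf f0.
rewrite (eq_measure_integral (mscale (NngNum (normr_ge0 c)) (pushforward mu affine))).
- exact: measurable_affine.
- move=> maff; rewrite ge0_integral_mscale //= (ge0_integral_pushforward maff) //.
- by move=> ? A mA _; exact: (lebesgue_measure_affine _ mA).
Qed.

Lemma integral_affine (f : R -> \bar R) : measurable_fun [set: R] f ->
    mu.-integrable [set: R] (fun y => f (c * y + e)%R) ->
  (\int[mu]_x f x = `|c|%:E * \int[mu]_y f (c * y + e)%R)%E.
Proof.
move=> mf intf; rewrite integralE [in RHS]integralE.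
rewrite (ge0_integral_affine _ (measurable_funepos mf)) //.
rewrite (ge0_integral_affine _ (measurable_funeneg mf)) //.
have Epos : (\int[mu]_y (fun y => f (c * y + e)%R)^\+ y =
             \int[mu]_y f^\+ (c * y + e)%R)%E.
  by apply: eq_integral => y _; rewrite !funeposE.
have Eneg : (\int[mu]_y (fun y => f (c * y + e)%R)^\- y =
             \int[mu]_y f^\- (c * y + e)%R)%E.
  by apply: eq_integral => y _; rewrite !funenegE.
rewrite -Epos -Eneg -muleBr //; exact: integrable_add_def.
Qed.

End affine_change_of_variables.

(* [s |-> (s^2 - 1) c - 2 s^2 (s - 1)] vanishes at [s = 1]; being nonpositive, its
   derivative [2 c - 2] there must vanish too. *)
Lemma eq1_of_scale_bound (R : realFieldType) (c : R) :
  (forall s, 0 < s -> (s ^+ 2 - 1) * c <= 2 * s ^+ 2 * (s - 1)) -> c = 1.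
Proof.
move=> H; pose d := `|c - 1|; pose t := d / (d + 3).
have d_ge0 : 0 <= d := normr_ge0 _.
have td : t * (d + 3) = d by rewrite /t divfK // gt_eqF //; lra.
have t_lt1 : t < 1 by rewrite ltr_pdivrMr; lra.
have [c_lt1|c_gt1|//] := ltgtP c 1.
- have dE : c = 1 - d by rewrite /d ltr0_norm ?subr_lt0 //; lra.
  have t_gt0 : 0 < t by rewrite divr_gt0 // /d ltr0_norm ?subr_lt0 //; lra.
  have := H (1 - t) ltac:(lra); rewrite dE; nra.
- have dE : c = 1 + d by rewrite /d gtr0_norm ?subr_gt0 //; lra.
  have t_gt0 : 0 < t by rewrite divr_gt0 // /d gtr0_norm ?subr_gt0 //; lra.
  have := H (1 + t) ltac:(lra); rewrite dE; nra.
Qed.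

Section normal_density.
Context {R : realType}.

Lemma normal_peak_scale (s : R) : s != 0 -> normal_peak s = normal_peak 1 / `|s|.
Proof.
move=> s0; rewrite /normal_peak.
have -> : s ^+ 2 * pi *+ 2 = s ^+ 2 * (1 ^+ 2 * pi *+ 2) by rewrite expr1n mul1r mulrnAr.
by rewrite sqrtrM ?sqr_ge0 // sqrtr_sqr invfM mulrC.
Qed.

Lemma normal_pdf_affine (m s y : R) : s != 0 ->
  normal_pdf m s (s * y + m) = normal_pdf 0 1 y / `|s|.
Proof.
move=> s0; rewrite !normal_pdfE ?oner_neq0 //= normal_peak_scale // /normal_fun.
rewrite mulrAC; congr (_ * _ * _); congr expR.
by rewrite addrK subr0; field.
Qed.

Lemma normal_pdf_gt0 (m s x : R) : s != 0 -> 0 < normal_pdf m s x.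
Proof.
by move=> s0; rewrite normal_pdfE //= mulr_gt0 ?normal_peak_gt0 ?expR_gt0.
Qed.

End normal_density.

Section standard_normal_moments.
Context {R : realType}.
Local Notation mu := (@lebesgue_measure R).
Local Notation phi := (@normal_pdf R 0 1).

Lemma normal_pdf01E y : phi y = normal_peak 1 * expR (- y ^+ 2 / 2).
Proof. by rewrite normal_pdfE ?oner_neq0 //= /normal_fun subr0 expr1n. Qed.

(* From [exp (3 y^2 / 8) >= 1 + 3 y^2 / 8]. *)
Lemma sqr_mul_normal_pdf01_le y :
  y ^+ 2 * phi y <= 8 / 3 * normal_peak 1 / normal_peak 2 * normal_pdf 0 2 y.
Proof.
have p1 := @normal_peak_gt0 R 1 (oner_neq0 _).
have p2 : 0 < normal_peak (2 : R) by apply: normal_peak_gt0; rewrite pnatr_eq0.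
rewrite normal_pdf01E normal_pdfE ?pnatr_eq0 //= /normal_fun subr0.
have -> : expR (- y ^+ 2 / (2 ^+ 2 *+ 2)) = expR (- y ^+ 2 / 2) * expR (3 * y ^+ 2 / 8).
  by rewrite -expRD; congr expR; field.
have := expR_ge1Dx (3 * y ^+ 2 / 8).
have := mulr_gt0 p1 (expR_gt0 (- y ^+ 2 / 2)).
set E1 := expR (- y ^+ 2 / 2); set E2 := expR (3 * y ^+ 2 / 8) => h ge.
have -> : 8 / 3 * normal_peak 1 / normal_peak 2 * (normal_peak 2 * (E1 * E2)) =
  8 / 3 * (normal_peak 1 * E1) * E2 by field; rewrite gt_eqF.
have := sqr_ge0 y; nra.
Qed.

Lemma integrable_sqr_normal_pdf01 : mu.-integrable setT (fun y => (y ^+ 2 * phi y)%:E).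
Proof.
pose C : R := 8 / 3 * normal_peak 1 / normal_peak 2.
have C_ge0 : 0 <= C by rewrite !mulr_ge0 ?invr_ge0 ?normal_peak_ge0.
apply: (le_integrable measurableT _ _
  (integrableZl measurableT C (integrable_normal_pdf 0 2))).
- apply/measurable_EFinP/measurable_funM; first exact: exprn_measurable.
  exact: measurable_normal_pdf.
- move=> y _; rewrite -EFinM !abse_EFin lee_fin.
  rewrite (ger0_norm (mulr_ge0 (sqr_ge0 y) (normal_pdf_ge0 _ _ _))).
  rewrite (ger0_norm (mulr_ge0 C_ge0 (normal_pdf_ge0 _ _ _))).
  exact: sqr_mul_normal_pdf01_le.
Qed.

Lemma integrable_mul_normal_pdf01 : mu.-integrable setT (fun y => (y * phi y)%:E).
Proof.
apply: (le_integrable measurableT _ _ (integrableD measurableT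
  (integrable_normal_pdf 0 1) integrable_sqr_normal_pdf01)).
- by apply/measurable_EFinP/measurable_funM => //; exact: measurable_normal_pdf.
- move=> y _; have phi_gt0 := @normal_pdf_gt0 R 0 1 y (oner_neq0 _).
  rewrite !abse_EFin lee_fin normrM (gtr0_norm phi_gt0).
  rewrite [X in _ <= X]ger0_norm; last by have := sqr_ge0 y; nra.
  have : `|y| <= 1 + y ^+ 2.
    by rewrite -(real_normK (num_real y)); have := sqr_ge0 (`|y| - 1); nra.
  nra.
Qed.

Lemma normal_moment1 : (\int[mu]_y (y * phi y)%:E = 0)%E.
Proof.
have N10 : -1 != 0 :> R by rewrite oppr_eq0 oner_neq0.
have reflect y : ((-1 * y + 0) * phi (-1 * y + 0))%:E = ((-1)%:E * (y * phi y)%:E)%E.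
  by rewrite addr0 !mulN1r !normal_pdf01E sqrrN -EFinM mulNr mulN1r.
have mf : measurable_fun setT (fun y : R => (y * phi y)%:E).
  by apply/measurable_EFinP/measurable_funM => //; exact: measurable_normal_pdf.
have int_reflect : mu.-integrable setT (fun y => ((-1 * y + 0) * phi (-1 * y + 0))%:E).
  apply: (eq_integrable measurableT _ _ _
    (integrableZl measurableT (-1) integrable_mul_normal_pdf01)).
  by move=> y _; rewrite reflect.
have I_odd : (\int[mu]_y (y * phi y)%:E = (-1)%:E * \int[mu]_y (y * phi y)%:E)%E.
  rewrite [LHS](integral_affine (-1) 0 N10 _ mf int_reflect) normrN normr1 mul1e.
  under eq_integral do rewrite reflect.
  by rewrite integralZl //; exact: integrable_mul_normal_pdf01.
have I_fin : (\int[mu]_y (y * phi y)%:E)%E \is a fin_num.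
  by apply: integrable_fin_num => //; exact: integrable_mul_normal_pdf01.
rewrite -(fineK I_fin); congr EFin.
by have := congr1 fine I_odd; rewrite mulN1e fineN; lra.
Qed.

(* [exp x >= 1 + x] applied to [x = (1 - s^-2) y^2 / 2], the exponent of the density ratio. *)
Lemma normal_pdf_scale_ge (s y : R) : 0 < s ->
  phi y / s * (1 + (1 - s ^-2) / 2 * y ^+ 2) <= normal_pdf 0 s y.
Proof.
move=> s_gt0; have s0 : s != 0 by rewrite gt_eqF.
rewrite normal_pdf01E normal_pdfE //= [normal_peak s]normal_peak_scale // gtr0_norm //.
rewrite /normal_fun subr0.
have -> : expR (- y ^+ 2 / (s ^+ 2 *+ 2)) =
    expR (- y ^+ 2 / 2) * expR ((1 - s ^-2) / 2 * y ^+ 2).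
  by rewrite -expRD; congr expR; field.
have := expR_ge1Dx ((1 - s ^-2) / 2 * y ^+ 2).
have : 0 < normal_peak 1 * expR (- y ^+ 2 / 2) / s.
  by rewrite divr_gt0 // mulr_gt0 ?expR_gt0 // normal_peak_gt0 ?oner_neq0.
set E1 := expR (- y ^+ 2 / 2); set E2 := expR _ => h ge.
have -> : normal_peak 1 / s * (E1 * E2) = normal_peak 1 * E1 / s * E2 by field.
by rewrite ler_pM2l.
Qed.

(* Integrating [normal_pdf_scale_ge] gives [s^-1 (1 + (1 - s^-2) / 2 * E[y^2]) <= 1]
   for all [s > 0], with equality at [s = 1]. *)
Lemma normal_moment2 : (\int[mu]_y (y ^+ 2 * phi y)%:E = 1)%E.
Proof.
have I_fin : (\int[mu]_y (y ^+ 2 * phi y)%:E)%E \is a fin_num.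
  by apply: integrable_fin_num => //; exact: integrable_sqr_normal_pdf01.
rewrite -(fineK I_fin); congr EFin; apply: eq1_of_scale_bound => s s_gt0.
set c := fine _; have Ic : (\int[mu]_y (y ^+ 2 * phi y)%:E)%E = c%:E by rewrite fineK.
set k := (1 - s ^-2) / 2.
have int_phi := integrable_normal_pdf 0 1 : mu.-integrable _ _.
have int1 := integrableZl measurableT s^-1 int_phi.
have int2 := integrableZl measurableT (s^-1 * k) integrable_sqr_normal_pdf01.
have lower_integral : (\int[mu]_y ((s^-1)%:E * (phi y)%:E
    + (s^-1 * k)%:E * (y ^+ 2 * phi y)%:E) = (s^-1 * (1 + k * c))%:E)%E.
  rewrite (integralD measurableT int1 int2).
  rewrite (integralZl measurableT int_phi) (integralZl measurableT integrable_sqr_normal_pdf01).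
  rewrite integral_normal_pdf Ic -!EFinM -EFinD; congr EFin; ring.
have : ((s^-1 * (1 + k * c))%:E <= 1)%E.
  rewrite -lower_integral -(integral_normal_pdf 0 s).
  apply: le_integral (integrableD measurableT int1 int2) (integrable_normal_pdf 0 s) _ => // y _.
  rewrite -!EFinM -EFinD lee_fin.
  have -> : s^-1 * phi y + s^-1 * k * (y ^+ 2 * phi y) = phi y / s * (1 + k * y ^+ 2).
    by ring.
  exact: normal_pdf_scale_ge.
rewrite lee_fin => h; rewrite -subr_le0.
have -> : (s ^+ 2 - 1) * c - 2 * s ^+ 2 * (s - 1) = 2 * s ^+ 3 * (s^-1 * (1 + k * c) - 1).
  by rewrite /k; field; rewrite gt_eqF.
by rewrite mulr_ge0_le0 ?subr_le0 // mulr_ge0 // exprn_ge0 // ltW.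
Qed.

End standard_normal_moments.

Section normal_quadratic_expectation.
Context {R : realType}.
Local Notation mu := (@lebesgue_measure R).
Local Notation phi := (@normal_pdf R 0 1).
Variables al be ga : R.

Let expand y : (phi y * (al + be * y + ga * y ^+ 2))%:E =
  (al%:E * (phi y)%:E + be%:E * (y * phi y)%:E + ga%:E * (y ^+ 2 * phi y)%:E)%E.
Proof. by rewrite -!EFinM -!EFinD; congr EFin; ring. Qed.

Let int_phi : mu.-integrable setT (fun y => (phi y)%:E).
Proof. exact: integrable_normal_pdf. Qed.
Let int0 := integrableZl measurableT al int_phi.
Let int1 := integrableZl measurableT be integrable_mul_normal_pdf01.
Let int2 := integrableZl measurableT ga integrable_sqr_normal_pdf01.

Lemma integrable_normal_pdf01_quadratic :
  mu.-integrable setT (fun y => (phi y * (al + be * y + ga * y ^+ 2))%:E).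
Proof.
apply: (eq_integrable measurableT _ _ _
  (integrableD measurableT (integrableD measurableT int0 int1) int2)).
by move=> y _; rewrite expand.
Qed.

Lemma integral_normal_pdf01_quadratic :
  (\int[mu]_y (phi y * (al + be * y + ga * y ^+ 2))%:E = (al + ga)%:E)%E.
Proof.
under eq_integral do rewrite expand.
rewrite (integralD measurableT (integrableD measurableT int0 int1) int2).
rewrite (integralD measurableT int0 int1) (integralZl measurableT int_phi).
rewrite (integralZl measurableT integrable_mul_normal_pdf01).
rewrite (integralZl measurableT integrable_sqr_normal_pdf01).
by rewrite integral_normal_pdf normal_moment1 normal_moment2 mule0 !mule1 adde0 -EFinD.
Qed.

Lemma integral_normal_pdf_quadratic (m s : R) : s != 0 ->
  (\int[mu]_x (normal_pdf m s x *
     (al + be * ((x - m) / s) + ga * ((x - m) / s) ^+ 2))%:E = (al + ga)%:E)%E.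
Proof.
move=> s0; pose P y := al + be * y + ga * y ^+ 2.
have affine_integrand y :
    (normal_pdf m s (s * y + m) * P ((s * y + m - m) / s))%:E =
    (`|s|^-1%:E * (phi y * P y)%:E)%E.
  rewrite normal_pdf_affine // (_ : (s * y + m - m) / s = y); last by field.
  by rewrite -EFinM mulrAC mulrC.
have mP : measurable_fun setT (fun x => (normal_pdf m s x * P ((x - m) / s))%:E).
  apply/measurable_EFinP/measurable_funM; first exact: measurable_normal_pdf.
  have mz : measurable_fun setT (fun x : R => (x - m) / s).
    by apply: measurable_funM => //; exact: measurable_funB.
  rewrite /P; apply: measurable_funD; first apply: measurable_funD => //.
  - exact: measurable_funM.
  - by apply: measurable_funM => //; exact: measurable_funX.
rewrite (integral_affine s m s0 _ mP); last first.
  apply: (eq_integrable measurableT _ _ _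
    (integrableZl measurableT _ integrable_normal_pdf01_quadratic)).
  by move=> y _; rewrite affine_integrand.
under eq_integral do rewrite affine_integrand.
rewrite (integralZl measurableT integrable_normal_pdf01_quadratic).
by rewrite integral_normal_pdf01_quadratic -EFinM mulrA divff ?normr_eq0 // mul1r.
Qed.
End normal_quadratic_expectation.

Section gaussian_KL.
Context {R : realType}.

(* The log-ratio of the two densities is a quadratic polynomial in [(x - m') / s']. *)
Lemma KL_normal1E (m' s' m s : R) : s' != 0 -> s != 0 ->
  KL_normal1 m' s' m s =
  (ln (normal_peak s' / normal_peak s) + (m' - m) ^+ 2 / (2 * s ^+ 2)
   + (s' ^+ 2 / (2 * s ^+ 2) - 1 / 2))%:E.
Proof.
move=> s'0 s0; rewrite /KL_normal1.
rewrite -(integral_normal_pdf_quadratic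
  (ln (normal_peak s' / normal_peak s) + (m' - m) ^+ 2 / (2 * s ^+ 2))
  (s' * (m' - m) / s ^+ 2) (s' ^+ 2 / (2 * s ^+ 2) - 1 / 2) m' s' s'0).
apply: eq_integral => x _; congr (EFin (_ * _)).
rewrite !normal_pdfE //= /normal_fun.
set A' := - (x - m') ^+ 2 / _; set A := - (x - m) ^+ 2 / _.
rewrite invfM mulrACA -expRB lnM ?posrE ?expR_gt0 ?divr_gt0 ?normal_peak_gt0 // expRK.
rewrite -!addrA; congr (_ + _); rewrite /A' /A.
set z := (x - m') / s'.
have -> : x - m = s' * z + (m' - m) by rewrite /z mulrC divfK // addrA subrK.
have -> : x - m' = s' * z by rewrite /z mulrC divfK.
by field; rewrite s'0 s0.
Qed.

End gaussian_KL.

Definition flow_cost {R : realType} (u v a : R) : R :=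
  - ln `|a| + ((v - a * u) ^+ 2 + a ^+ 2) / 2 - 1 / 2.

Lemma KL_normal1_affine {R : realType} (m s w w' a b : R) :
    a != 0 -> s != 0 -> w' = a * w + b ->
  KL_normal1 (a * m + b) (a * s) m s =
  (flow_cost ((w - m) / s) ((w' - m) / s) a)%:E.
Proof.
move=> a0 s0 ->; rewrite KL_normal1E ?mulf_neq0 //; congr EFin.
rewrite [normal_peak (a * s)]normal_peak_scale ?mulf_neq0 //.
rewrite [normal_peak s]normal_peak_scale // normrM.
have -> : normal_peak 1 / (`|a| * `|s|) / (normal_peak 1 / `|s|) = `|a|^-1.
  by field; rewrite !normr_eq0 a0 s0 gt_eqF // normal_peak_gt0 // oner_neq0.
by rewrite lnV ?posrE ?normr_gt0 // /flow_cost; field; rewrite s0.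
Qed.

Section flow_cost_minimum.
Context {R : realType}.
Variables u v : R.
Local Notation cost := (flow_cost u v).

Definition flow_root (delta : R) : R :=
  (u * v + delta * Num.sqrt (4 + u ^+ 2 * (4 + v ^+ 2))) / (2 * (1 + u ^+ 2)).

Let k_gt0 : 0 < 1 + u ^+ 2.
Proof. by have := sqr_ge0 u; lra. Qed.

Let disc_gt0 : 0 < 4 + u ^+ 2 * (4 + v ^+ 2).
Proof. by have := sqr_ge0 u; have := sqr_ge0 v; nra. Qed.

Let sqrt_disc_gt : `|u * v| < Num.sqrt (4 + u ^+ 2 * (4 + v ^+ 2)).
Proof.
rewrite -sqrtr_sqr ltr_sqrt // exprMn.
by have := sqr_ge0 u; have := sqr_ge0 v; nra.
Qed.

(* The stationarity equation [cost'(r) = 0], multiplied by [r]. *)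
Lemma flow_root_stationary delta : delta ^+ 2 = 1 ->
  (1 + u ^+ 2) * flow_root delta ^+ 2 - u * v * flow_root delta - 1 = 0.
Proof.
move=> delta2; rewrite /flow_root; set D := 4 + _.
have sqrtD2 : Num.sqrt D ^+ 2 = D by rewrite sqr_sqrtr // ltW.
rewrite (_ : _ - 1 = (delta ^+ 2 * Num.sqrt D ^+ 2 - (u * v) ^+ 2 - 4 * (1 + u ^+ 2))
                     / (4 * (1 + u ^+ 2))); last by field; rewrite gt_eqF.
by rewrite delta2 sqrtD2 /D mul1r (_ : _ - _ - _ = 0) ?mul0r //; ring.
Qed.

Lemma flow_root1_gt0 : 0 < flow_root 1.
Proof.
rewrite /flow_root divr_gt0 ?mulr_gt0 //.
by have := sqrt_disc_gt; have := ler_norm (- (u * v)); rewrite normrN; lra.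
Qed.

Lemma flow_rootN1_lt0 : flow_root (-1) < 0.
Proof.
rewrite /flow_root pmulr_llt0 ?invr_gt0 ?mulr_gt0 //.
by have := sqrt_disc_gt; have := ler_norm (u * v); lra.
Qed.

(* On the half-line of sign [r], [ln x <= x - 1] at [x = a / r] makes the cost
   exceed its value at the stationary point [r] by a quadratic margin. *)
Lemma flow_cost_gap r a :
    (1 + u ^+ 2) * r ^+ 2 - u * v * r - 1 = 0 -> 0 < a * r ->
  (1 + u ^+ 2) * (a - r) ^+ 2 / 2 <= cost a - cost r.
Proof.
move=> stat ar.
have r0 : r != 0 by apply: contraTneq ar => ->; rewrite mulr0 ltxx.
have a0 : a != 0 by apply: contraTneq ar => ->; rewrite mul0r ltxx.
have a_r_gt0 : 0 < a / r.
  by rewrite (_ : a / r = (a * r) / r ^+ 2) ?divr_gt0 ?exprn_even_gt0 //; field.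
have ln_le : ln `|a| - ln `|r| <= a / r - 1.
  rewrite -ln_div ?posrE ?normr_gt0 // -normf_div gtr0_norm //.
  by have := @le_ln1Dx R (a / r - 1); rewrite addrCA subrr addr0; apply; lra.
have uvE : u * v = (1 + u ^+ 2) * r - r^-1.
  apply: (mulIf r0); rewrite (_ : u * v * r = (1 + u ^+ 2) * r ^+ 2 - 1); last by lra.
  by field.
have -> : cost a - cost r =
    ln `|r| - ln `|a| + ((1 + u ^+ 2) * (a ^+ 2 - r ^+ 2) / 2 - u * v * (a - r)).
  by rewrite /flow_cost; field.
have -> : (1 + u ^+ 2) * (a ^+ 2 - r ^+ 2) / 2 - u * v * (a - r) =
    (1 + u ^+ 2) * (a - r) ^+ 2 / 2 + (a / r - 1).
  by rewrite uvE; field.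
lra.
Qed.

Lemma flow_root_min delta a : delta ^+ 2 = 1 -> 0 < a * flow_root delta ->
  cost (flow_root delta) <= cost a.
Proof.
move=> delta2 ar; have := flow_cost_gap _ _ (flow_root_stationary _ delta2) ar.
by have := sqr_ge0 (a - flow_root delta); nra.
Qed.

Let sqr1 : (1 : R) ^+ 2 = 1. Proof. exact: expr1n. Qed.
Let sqrN1 : (-1 : R) ^+ 2 = 1. Proof. by rewrite sqrrN expr1n. Qed.

Lemma flow_cost_min_exists :
  exists a, a != 0 /\ forall a', a' != 0 -> cost a <= cost a'.
Proof.
have r1 := flow_root1_gt0; have rN1 := flow_rootN1_lt0.
have min_pos a : 0 < a -> cost (flow_root 1) <= cost a.
  by move=> a_gt0; apply: flow_root_min sqr1 _; rewrite mulr_gt0.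
have min_neg a : a < 0 -> cost (flow_root (-1)) <= cost a.
  by move=> a_lt0; apply: flow_root_min sqrN1 _; rewrite nmulr_rgt0.
have [le1|lt1] := lerP (cost (flow_root 1)) (cost (flow_root (-1))).
- exists (flow_root 1); split=> [|a']; first by rewrite gt_eqF.
  rewrite neq_lt => /orP[/min_neg|/min_pos //]; exact: le_trans.
- exists (flow_root (-1)); split=> [|a']; first by rewrite lt_eqF.
  rewrite neq_lt => /orP[/min_neg //|/min_pos]; exact/le_trans/ltW.
Qed.

Lemma flow_cost_minP a : a != 0 -> (forall a', a' != 0 -> cost a <= cost a') ->
  exists delta : R, (delta = 1 \/ delta = -1) /\ a = flow_root delta.
Proof.
move=> a0 a_min.
have root_eq delta : delta ^+ 2 = 1 -> 0 < a * flow_root delta -> a = flow_root delta.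
  move=> delta2 ar; have r0 : flow_root delta != 0.
    by apply: contraTneq ar => ->; rewrite mulr0 ltxx.
  have := flow_cost_gap _ _ (flow_root_stationary _ delta2) ar.
  have := a_min _ r0; have := sqr_ge0 (a - flow_root delta) => sq_ge0 le gap.
  have : (a - flow_root delta) ^+ 2 == 0 by rewrite eq_le sq_ge0 andbT; nra.
  by rewrite sqrf_eq0 subr_eq0 => /eqP.
move: a0; rewrite neq_lt => /orP[a_lt0|a_gt0].
- exists (-1); split; first by right.
  by apply: root_eq sqrN1 _; rewrite nmulr_rgt0 // flow_rootN1_lt0.
- exists 1; split; first by left.
  by apply: root_eq sqr1 _; rewrite mulr_gt0 // flow_root1_gt0.
Qed.

End flow_cost_minimum.

Section normal_affine_pushforward.
Context {R : realType}.
Local Notation mu := (@lebesgue_measure R).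

Lemma normal_pdf_affine_image (m s a b y : R) : s != 0 -> a != 0 ->
  `|a| * normal_pdf (a * m + b) (a * s) (a * y + b) = normal_pdf m s y.
Proof.
move=> s0 a0; set z := (y - m) / s.
have -> : a * y + b = a * s * z + (a * m + b) by rewrite /z; field.
have -> : y = s * z + m by rewrite /z; field.
rewrite !normal_pdf_affine ?mulf_neq0 // normrM.
by field; rewrite !normr_eq0 a0 s0.
Qed.

Lemma pushforward_normal_prob (m s a b : R) (A : set R) :
    s != 0 -> a != 0 -> measurable A ->
  pushforward (normal_prob m s) (fun x => a * x + b) A =
  normal_prob (a * m + b) (a * s) A.
Proof.
move=> s0 a0 mA; rewrite /pushforward /normal_prob integral_mkcond [RHS]integral_mkcond.
set f := (fun x => (normal_pdf (a * m + b) (a * s) x)%:E) \_ A.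
have mf : measurable_fun setT f.
  apply/(measurable_restrictT _ mA)/measurable_funTS.
  by apply/measurable_EFinP; exact: measurable_normal_pdf.
have f_ge0 x : (0 <= f x)%E.
  by rewrite /f /patch; case: ifP => _ //; rewrite lee_fin normal_pdf_ge0.
rewrite [RHS](ge0_integral_affine a b a0 f mf f_ge0) -ge0_integralZl //; last first.
  exact: measurableT_comp mf (measurable_affine a b).
apply: eq_integral => y _; rewrite /f /patch.
rewrite (_ : (y \in _ @^-1` A) = (a * y + b \in A)) //.
case: ifPn => _; last by rewrite mule0.
by rewrite -EFinM normal_pdf_affine_image.
Qed.

End normal_affine_pushforward.

Lemma sum_argmin_component {R : numDomainType} {I : finType}
    (F : I -> R -> R) (P : I -> R -> Prop) (a : I -> R) :
    (forall i, P i (a i)) ->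
    (forall a', (forall i, P i (a' i)) -> \sum_i F i (a i) <= \sum_i F i (a' i)) ->
  forall i x, P i x -> F i (a i) <= F i x.
Proof.
move=> Pa a_min i x Px; pose a' j := if j == i then x else a j.
have Pa' j : P j (a' j) by rewrite /a'; case: eqP => [->|].
have off_i : \sum_(j | j != i) F j (a' j) = \sum_(j | j != i) F j (a j).
  by apply: eq_bigr => j /negbTE ji; rewrite /a' ji.
have := a_min a' Pa'; rewrite (bigD1 i) //= [X in _ <= X](bigD1 i) //= off_i.
by rewrite lerD2r /a' eqxx.
Qed.

Section optimal_diagonal_flow.
Context {R : realType} {d : nat} (mu sigma w w' : 'I_d -> R).
Hypothesis sigma_neq0 : forall i, sigma i != 0.
Local Notation cost i := (flow_cost ((w i - mu i) / sigma i) ((w' i - mu i) / sigma i)).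

Lemma flow_KLE a b : admissible w w' a b ->
  flow_KL mu sigma a b = (\sum_i cost i (a i))%:E.
Proof.
move=> adm; rewrite /flow_KL /KL_diag_normal -sumEFin; apply: eq_bigr => i _.
by have [a0 hw] := adm i; apply: KL_normal1_affine.
Qed.

Lemma admissible_intercept a : (forall i, a i != 0) ->
  admissible w w' a (fun i => w' i - a i * w i).
Proof. by move=> a0 i; split; [exact: a0 | rewrite addrC subrK]. Qed.

Lemma optimal_flow_exists : exists a b, optimal_flow mu sigma w w' a b.
Proof.
have [a a_min] := choice (fun i =>
  flow_cost_min_exists ((w i - mu i) / sigma i) ((w' i - mu i) / sigma i)).
have a0 i := (a_min i).1.
exists a, (fun i => w' i - a i * w i); split; first exact: admissible_intercept.
move=> a' b' adm'.
rewrite (flow_KLE _ _ (admissible_intercept _ a0)) (flow_KLE _ _ adm') lee_fin.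
by apply: ler_sum => i _; apply: (a_min i).2; exact: (adm' i).1.
Qed.

Lemma optimal_flow_min_component a b : optimal_flow mu sigma w w' a b ->
  forall i x, x != 0 -> cost i (a i) <= cost i x.
Proof.
move=> [adm opt]; apply: (sum_argmin_component (fun i => cost i) (fun _ x => x != 0)).
  by move=> i; exact: (adm i).1.
move=> a' a'0; rewrite -lee_fin -(flow_KLE _ _ adm).
by rewrite -(flow_KLE _ _ (admissible_intercept _ a'0)); exact/opt/admissible_intercept.
Qed.

End optimal_diagonal_flow.

Theorem mainTheorem2 (R : realType) (d : nat) (mu w w' sigma : 'I_d -> R)
    (hsigma : forall i, 0 < sigma i) :
  (exists a b, optimal_flow mu sigma w w' a b) /\
  forall a b, optimal_flow mu sigma w w' a b ->
    forall i : 'I_d,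
      let u := (w i - mu i) / sigma i in
      let v := (w' i - mu i) / sigma i in
      (exists delta : R, (delta = 1 \/ delta = -1) /\
         a i = (u * v + delta * Num.sqrt (4 + u ^+ 2 * (4 + v ^+ 2)))
               / (2 * (1 + u ^+ 2))) /\
      (* the i-th component of P' (push-forward of N(mu_i, sigma_i^2) under
         x |-> a_i x + b_i) is N(mu'_i, sigma'_i^2) with
         sigma'_i = a_i sigma_i and mu'_i = a_i (mu_i - w_i) + w'_i *)
      (forall A : set R, measurable A ->
         pushforward (normal_prob (mu i) (sigma i)) (fun x => a i * x + b i) A
         = normal_prob (a i * (mu i - w i) + w' i) (a i * sigma i) A).
Proof.
have sigma0 i : sigma i != 0 by rewrite gt_eqF.
split; first exact: optimal_flow_exists.
move=> a b opt i u v; have [a0 hw] := opt.1 i.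
split; first exact: flow_cost_minP _ _ _ a0
  (optimal_flow_min_component _ _ _ _ sigma0 _ _ opt i).
have -> : a i * (mu i - w i) + w' i = a i * mu i + b i by rewrite hw; ring.
by move=> A mA; exact: pushforward_normal_prob.
Qed.
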